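(* Consider Algorithm 1 instantiated with a locally computed procedure choose_leader. If choose_leader returns the same honest party at all honest parties for infinitely many rounds, then each honest party commits an unbounded number of blocks.
   Context: System model: $n$ parties $\Pi=\{p_1,\dots,p_n\}$, at most $f<n/3$ faulty. A party is crashed if it halts prematurely; Byzantine if it deviates from the protocol arbitrarily; honest if neither. Non-Byzantine parties follow the protocol until they (possibly) crash. Communication is eventually synchronous: there is an unknown global stabilization time (GST) after which every message arrives within a known bound $\delta$. Blocks: a block contains transactions, a link to a parent block (implied chain back to genesis), a round number, an author id, and a certificate from which a set of $2f+1$ endorsing parties can be obtained. certified$(B,r)$ is a local predicate saying $B$ has a valid certificate ($2f+1$ endorsements) for round $r$. $B\longrightarrow B'$ means $B$ is on $B'$'s implied chain. Committing a block commits its implied chain. LBR abstraction: each party can invoke $LBR(r,\ell)$; non-Byzantine parties endorse a block with round $r$ and author $\ell$ only by calling $LBR(r,\ell)$. Every invocation returns within $\Delta_l>c\delta$ time ($c$ an implementation constant) a block with round number $r'\le r$. Round $r$ has $k$ LBR-synchronized($\ell$) invocations if $k$ honest parties invoke $LBR(r,\ell)$ after GST and their execution intervals share a common intersection of length at least $c\delta$. Guarantees: (Endorsement) if certified$(B,r)$ then $B$'s endorser set has $2f+1$ parties; (Agreement) any two certified blocks returned to honest parties by LBR satisfy $B\longrightarrow B'$ or $B'\longrightarrow B$; (Progress) if round $r$ has $k\ge 2f+1$ LBR-synchronized($\ell$) invocations and $\ell$ is honest, they all return a certified block with round number $r$ authored by $\ell$; (Blocking) if a non-Byzantine $\ell$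 never invokes $LBR(r,\ell)$, no $LBR(r,\ell)$ invocation returns a certified block formed in round $r$; (Reputation) if a non-Byzantine $p$ never invokes LBR for round $r$, no certified block with round number $r$ has $p$ among its endorsers. Pacemaker: produces new_round$(r)$ notifications at honest parties for every $r$; if all new_round$(r)$ notifications at non-Byzantine parties occur after GST, the first at $T_f$ and last at $T_l$, then $T_l-T_f\le\delta$ and no non-Byzantine party receives new_round$(r+1)$ before $T_l+\Delta_p$, where $\Delta_p=\Delta_l$. Algorithm 1 (party $p_i$): initially commit_head $:=$ genesis. Upon new_round$(r)$: leader $:=$ choose_leader$(r,$ commit_head$)$ (a local computation returning a party in $\Pi$); $B:=LBR(r,\text{leader})$; if commit_head $\longrightarrow B$, commit $B$ (and all not-yet-committed blocks on its implied chain) and set commit_head $:=B$. *)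

From mathcomp Require Import all_boot all_order all_algebra.
Set Implicit Arguments. Unset Strict Implicit. Unset Printing Implicit Defensive.
Import Order.TTheory GRing.Theory Num.Theory.
Local Open Scope ring_scope.

Inductive fault := Honest | Crashed | Byzantine.

Definition is_honest (k : fault) : bool := if k is Honest then true else false.
Definition non_byz (k : fault) : bool := if k is Byzantine then false else true.

Definition ancestor (Block : Type) (parent : Block -> Block) (B B' : Block) : Prop :=
  exists k : nat, iter k parent B' = B.

(* The invocations of LBR(r, _) by the parties in S (each invoked at the time
   of its new_round(r) notification) happen after GST and their execution
   intervals [new_round(r), new_round(r+1)] share a common intersection
   [t0, t0 + c*delta] of length at least c*delta. *)
Definition lbr_synchronized (R : realFieldType) (n : nat) (GST c delta : R)
  (notif : 'I_n -> nat -> option R) (S : {set 'I_n}) (r : nat) : Prop :=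
  exists t0 : R, forall p, p \in S ->
    exists tp tq, notif p r = Some tp /\ notif p r.+1 = Some tq /\
      GST <= tp /\ tp <= t0 /\ t0 + c * delta <= tq.

(* B has been committed by a party (with commit heads ch and LBR outputs out)
   by the end of round r: in some round r'+1 <= r the check
   commit_head --> B_{r'+1} succeeded and B lies on the chain of B_{r'+1}. *)
Definition committed (Block : Type) (parent : Block -> Block)
  (ch out : nat -> Block) (r : nat) (B : Block) : Prop :=
  exists r' : nat, (r' < r)%N /\ ancestor parent (ch r') (out r'.+1) /\
    ancestor parent B (out r'.+1).

From mathcomp Require Import all_boot all_order all_algebra.
Import Order.TTheory GRing.Theory Num.Theory.
Local Open Scope ring_scope.

From Stdlib Require Import Classical.
From mathcomp Require Import lra zify.

Set Implicit Arguments.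
Unset Strict Implicit.
Unset Printing Implicit Defensive.

(** After GST, a round whose leader is the same honest party at every honest
    party is run in LBR-synchronized fashion by all (at least 2f+1) honest
    parties, so by Progress each of them obtains a certified block of that
    round. Agreement and the fact that rounds strictly increase along implied
    chains force the current commit head to lie on the chain of such a block,
    so it gets committed. Infinitely many good rounds thus yield infinitely
    many committed blocks, all distinct because their rounds differ. *)

Section ImpliedChains.

Context {Block : eqType} {genesis : Block} {parent : Block -> Block}
  {bround : Block -> nat}.
Hypothesis parent_genesis : parent genesis = genesis.
Hypothesis bround_parent :
  forall B, B <> genesis -> (bround (parent B) < bround B)%N.

Lemma bround_iter_parent k B : (bround (iter k parent B) <= bround B)%N.
Proof.
elim: k => //= k IH; apply: leq_trans IH.
case: (eqVneq (iter k parent B) genesis) => [->|/eqP Hne].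
  by rewrite parent_genesis.
exact/ltnW/bround_parent.
Qed.

Lemma ancestor_bround B B' :
  ancestor parent B B' -> (bround B <= bround B')%N.
Proof. by case=> k <-; apply: bround_iter_parent. Qed.

Lemma ancestor_genesis B : ancestor parent genesis B.
Proof.
have [m] := ubnP (bround B); elim: m B => // m IH B /ltnSE Hb.
case: (eqVneq B genesis) => [->|/eqP Hne]; first by exists 0%N.
have [k <-] := IH (parent B) (leq_trans (bround_parent Hne) Hb).
by exists k.+1; rewrite iterSr.
Qed.

End ImpliedChains.

Lemma committed_mono (Block : Type) (parent : Block -> Block)
  (ch out : nat -> Block) r r' B :
  (r <= r')%N -> committed parent ch out r B -> committed parent ch out r' B.
Proof. by move=> Hr [r0 [Hr0 HB]]; exists r0; split=> //; apply: leq_trans Hr. Qed.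

Section CommitHead.

Context {Block : eqType} {genesis : Block} {parent : Block -> Block}
  {bround : Block -> nat} {certified : Block -> nat -> Prop}
  {ch out : nat -> Block}.
Hypothesis parent_genesis : parent genesis = genesis.
Hypothesis bround_parent :
  forall B, B <> genesis -> (bround (parent B) < bround B)%N.
Hypothesis ch0 : ch 0%N = genesis.
Hypothesis ch_commit :
  forall r, ancestor parent (ch r) (out r.+1) -> ch r.+1 = out r.+1.
Hypothesis ch_keep :
  forall r, ~ ancestor parent (ch r) (out r.+1) -> ch r.+1 = ch r.
Hypothesis out_valid : forall r, (0 < r)%N ->
  (bround (out r) <= r)%N /\ (out r = genesis \/ exists r', certified (out r) r').
Hypothesis out_agreement : forall r r' r1 r2, (0 < r)%N -> (0 < r')%N ->
  certified (out r) r1 -> certified (out r') r2 ->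
  ancestor parent (out r) (out r') \/ ancestor parent (out r') (out r).

Lemma commit_head_genesis_or_output m :
  ch m = genesis \/ exists2 m', (0 < m' <= m)%N & ch m = out m'.
Proof.
elim: m => [|m IH]; first by left.
have [Hanc|Hnanc] := classic (ancestor parent (ch m) (out m.+1)).
  by right; exists m.+1; [rewrite leqnn | apply: ch_commit].
rewrite ch_keep //; case: IH => [|[m' Hm' ->]]; first by left.
by right; exists m' => //; lia.
Qed.

(** The previous commit head is genesis or an earlier output; by Agreement it
    and [out r] lie on one chain, and [out r] cannot be the ancestor since its
    round is larger. *)
Lemma commit_head_ancestor_output r r1 :
  (0 < r)%N -> certified (out r) r1 -> bround (out r) = r ->
  ancestor parent (ch r.-1) (out r).
Proof.
move=> Hr Hcert Hround.
have anc_gen := ancestor_genesis bround_parent.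
case: (commit_head_genesis_or_output r.-1) => [->|[m /andP[Hm0 Hm] ->]] //.
have [Hbm [->|[r2 Hcert2]]] := out_valid Hm0; first exact: anc_gen.
case: (out_agreement Hm0 Hr Hcert2 Hcert) => //.
by move=> /(ancestor_bround parent_genesis bround_parent); rewrite Hround; lia.
Qed.

Lemma committed_output r r1 :
  (0 < r)%N -> certified (out r) r1 -> bround (out r) = r ->
  committed parent ch out r.+1 (out r).
Proof.
move=> Hr Hcert Hround; exists r.-1; rewrite prednK //.
by split=> //; split; [exact: commit_head_ancestor_output Hcert Hround|exists 0%N].
Qed.

End CommitHead.

Lemma eventually_forall (I : finType) (P : I -> nat -> Prop) :
  (forall i, exists r0, forall r, (r0 <= r)%N -> P i r) ->
  exists r0, forall i r, (r0 <= r)%N -> P i r.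
Proof.
move=> HP.
suff [r0 Hr0] : exists r0, forall i, i \in enum I -> forall r, (r0 <= r)%N -> P i r.
  by exists r0 => i; apply: Hr0; rewrite mem_enum.
elim: (enum I) => [|i s [r1 Hr1]]; first by exists 0%N.
have [r2 Hr2] := HP i.
exists (maxn r1 r2) => j; rewrite inE => /orP[/eqP-> | Hj] r Hr.
  by apply: Hr2; lia.
by apply: Hr1 => //; lia.
Qed.

Lemma quorum_of_few_faulty n f (P : pred 'I_n) :
  (3 * f < n)%N -> (#|[set p | ~~ P p]| <= f)%N -> (2 * f + 1 <= #|[set p | P p]|)%N.
Proof.
move=> Hn Hfew; have := cardsC [set p | P p]; rewrite card_ord.
have -> : ~: [set p | P p] = [set p | ~~ P p] by apply/setP => p; rewrite !inE.
lia.
Qed.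

(** The common intersection starts at the last round-[r] notification in [S]:
    every party of [S] stays in round [r] for at least [Delta_l] after it. *)
Lemma lbr_synchronized_of_pacemaker (R : realFieldType) n (GST c delta Delta_l : R)
  (notif : 'I_n -> nat -> option R) (S : {set 'I_n}) r :
  c * delta <= Delta_l ->
  (forall p, p \in S -> notif p r <> None /\ notif p r.+1 <> None) ->
  (forall p t, p \in S -> notif p r = Some t -> GST <= t) ->
  (forall p q tp tq, p \in S -> q \in S ->
     notif p r = Some tp -> notif q r.+1 = Some tq -> tp + Delta_l <= tq) ->
  lbr_synchronized GST c delta notif S r.
Proof.
move=> HcD Hdef Hgst Hgap.
case: (set_0Vmem S) => [-> | [p0 Hp0]]; first by exists 0 => p; rewrite inE.
pose last_notif q := odflt 0 (notif q r).
have [pm Hpm Hmax] := @arg_maxP _ _ _ p0 (mem S) last_notif Hp0.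
exists (last_notif pm) => q Hq.
have [/eqP Hq0 /eqP Hq1] := Hdef q Hq; have [/eqP Hpm0 _] := Hdef pm Hpm.
case Etp: (notif q r) Hq0 => [tp|] // _; case Etq: (notif q r.+1) Hq1 => [tq|] // _.
case Etm: (notif pm r) Hpm0 => [tm|] // _.
have := Hmax q Hq; have := Hgap pm q tm tq Hpm Hq Etm Etq.
rewrite /last_notif Etp Etm /= => Hgapq Hle.
exists tp, tq; do 3!split=> //; first exact: Hgst Etp.
split=> //; lra.
Qed.

Lemma unbounded_uniq_seq (T : eqType) (rank : T -> nat) (P : nat -> T -> Prop) :
  (forall r r' x, (r <= r')%N -> P r x -> P r' x) ->
  (forall N, exists r x, (N <= rank x)%N /\ P r x) ->
  forall k, exists r (s : seq T),
    [/\ uniq s, (k <= size s)%N & forall x, x \in s -> P r x].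
Proof.
move=> Pmono Hunb.
suff Hbound k : exists r M (s : seq T), [/\ uniq s, (k <= size s)%N
    & forall x, x \in s -> P r x /\ (rank x < M)%N].
  move=> k; have [r [M [s [Hu Hk Hs]]]] := Hbound k.
  by exists r, s; split=> // x /Hs[].
elim: k => [|k [r [M [s [Hu Hk Hs]]]]]; first by exists 0%N, 0%N, [::].
have [r' [x [HMx Hx]]] := Hunb M.
exists (maxn r r'), (maxn M (rank x).+1), (x :: s); split=> //=.
  by rewrite Hu andbT; apply/negP => /Hs[_]; lia.
move=> y; rewrite inE => /orP[/eqP-> | /Hs[Hy Hry]]; split; try lia.
  by apply: Pmono Hx; lia.
by apply: Pmono Hy; lia.
Qed.
Theorem lemma9
  (R : realFieldType) (n f : nat) (kind : 'I_n -> fault)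
  (GST delta c Delta_l : R)
  (Block : eqType) (genesis : Block) (parent : Block -> Block)
  (bround : Block -> nat) (author : Block -> 'I_n)
  (certified : Block -> nat -> Prop) (endorsers : Block -> {set 'I_n})
  (choose_leader : nat -> Block -> 'I_n)
  (notif : 'I_n -> nat -> option R)
  (invoked : 'I_n -> nat -> 'I_n -> Prop)
  (ch out : 'I_n -> nat -> Block) (ret_time : 'I_n -> nat -> R) :
  (* system model *)
  (3 * f < n)%N ->
  (#|[set p | ~~ is_honest (kind p)]| <= f)%N ->
  0 < delta -> 0 < c -> c * delta < Delta_l ->
  (* blocks: implied chains back to genesis, rounds increase along chains *)
  parent genesis = genesis -> bround genesis = 0%N ->
  (forall B, B <> genesis -> (bround (parent B) < bround B)%N) ->
  (* pacemaker *)
  (forall p r, is_honest (kind p) -> (0 < r)%N -> notif p r <> None) ->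
  (forall r, (0 < r)%N ->
     (forall p t, non_byz (kind p) -> notif p r = Some t -> GST <= t) ->
     (forall p q tp tq, non_byz (kind p) -> non_byz (kind q) ->
        notif p r = Some tp -> notif q r = Some tq -> tp - tq <= delta) /\
     (forall p q tp tq, non_byz (kind p) -> non_byz (kind q) ->
        notif p r = Some tp -> notif q r.+1 = Some tq -> tp + Delta_l <= tq)) ->
  (* non-Zeno executions *)
  (forall p (T : R), non_byz (kind p) ->
     exists r0, forall r t, (r0 <= r)%N -> notif p r = Some t -> T <= t) ->
  (* Algorithm 1 at honest parties *)
  (forall p, is_honest (kind p) -> ch p 0%N = genesis) ->
  (forall p r, is_honest (kind p) ->
     ancestor parent (ch p r) (out p r.+1) -> ch p r.+1 = out p r.+1) ->
  (forall p r, is_honest (kind p) ->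
     ~ ancestor parent (ch p r) (out p r.+1) -> ch p r.+1 = ch p r) ->
  (forall p r l, is_honest (kind p) -> (0 < r)%N ->
     (invoked p r l <-> l = choose_leader r (ch p r.-1))) ->
  (* LBR: returns within Delta_l a (certified) block of round <= r *)
  (forall p r t, is_honest (kind p) -> (0 < r)%N -> notif p r = Some t ->
     t <= ret_time p r <= t + Delta_l) ->
  (forall p r, is_honest (kind p) -> (0 < r)%N ->
     (bround (out p r) <= r)%N /\
     (out p r = genesis \/ exists r', certified (out p r) r')) ->
  (* LBR Endorsement *)
  (forall B r, certified B r -> (2 * f + 1 <= #|endorsers B|)%N) ->
  (* LBR Agreement *)
  (forall p q r r' r1 r2, is_honest (kind p) -> is_honest (kind q) ->
     (0 < r)%N -> (0 < r')%N ->
     certified (out p r) r1 -> certified (out q r') r2 ->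
     ancestor parent (out p r) (out q r') \/ ancestor parent (out q r') (out p r)) ->
  (* LBR Progress *)
  (forall r l (S : {set 'I_n}), (0 < r)%N -> is_honest (kind l) ->
     (forall p, p \in S -> is_honest (kind p) /\ invoked p r l) ->
     (2 * f + 1 <= #|S|)%N ->
     lbr_synchronized GST c delta notif S r ->
     forall p, p \in S ->
       certified (out p r) r /\ bround (out p r) = r /\ author (out p r) = l) ->
  (* LBR Blocking *)
  (forall r l, (0 < r)%N -> non_byz (kind l) -> ~ invoked l r l ->
     forall p, is_honest (kind p) -> invoked p r l ->
       ~ (certified (out p r) r /\ bround (out p r) = r)) ->
  (* LBR Reputation *)
  (forall p r, (0 < r)%N -> non_byz (kind p) -> (forall l, ~ invoked p r l) ->
     forall B r', certified B r' -> bround B = r -> p \notin endorsers B) ->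
  (* hypothesis of the lemma *)
  (forall N : nat, exists r : nat, (N <= r)%N /\ (0 < r)%N /\
     exists l, is_honest (kind l) /\
       forall p, is_honest (kind p) -> choose_leader r (ch p r.-1) = l) ->
  (* conclusion: unboundedly many committed blocks *)
  forall p, is_honest (kind p) ->
  forall k : nat, exists (r : nat) (s : seq Block),
    uniq s /\ (k <= size s)%N /\
    (forall B, B \in s -> committed parent (ch p) (out p) r B).
Proof.
move=> Hf Hbyz _ _ HcD Hpg _ Hpar Hnotif Hpace Hzeno Hch0 Hch1 Hch2 Hinv _ Hout _
  Hagr Hprog _ _ Hgood p Hp.
have honest_non_byz q : is_honest (kind q) -> non_byz (kind q) by case: (kind q).
have [r0 Hr0] : exists r0, forall q r, (r0 <= r)%N ->
    non_byz (kind q) -> forall t, notif q r = Some t -> GST <= t.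
  apply: eventually_forall => q; case Hq: (non_byz (kind q)); last by exists 0%N.
  by have [r1 Hr1] := Hzeno q GST Hq; exists r1 => r Hr _ t; apply: Hr1.
have commits_good_round N : exists r B, (N <= bround B)%N /\
    committed parent (ch p) (out p) r B.
  have [r [HNr [Hr [l [Hl Hlead]]]]] := Hgood (maxn N r0).
  have Hr0r : (r0 <= r)%N by lia.
  set H := [set q | is_honest (kind q)].
  have H_invoke q : q \in H -> is_honest (kind q) /\ invoked q r l.
    by rewrite inE => Hq; split=> //; apply/(Hinv q r l Hq Hr); rewrite Hlead.
  have H_sync : lbr_synchronized GST c delta notif H r.
    have [_ Hgap] := Hpace r Hr (fun q t Hq => Hr0 q r Hr0r Hq t).
    apply: lbr_synchronized_of_pacemaker (ltW HcD) _ _ _ => [q|q t|q q' tp tq];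
      rewrite !inE => Hq.
    - by split; apply: Hnotif.
    - exact: Hr0 (honest_non_byz q Hq) t.
    - by move=> Hq'; apply: Hgap; apply: honest_non_byz.
  have [Hcert [Hround _]] := Hprog r l H Hr Hl H_invoke
    (quorum_of_few_faulty Hf Hbyz) H_sync p ltac:(by rewrite inE).
  exists r.+1, (out p r); split; first by rewrite Hround; lia.
  apply: (committed_output Hpg Hpar (Hch0 p Hp) (fun r => Hch1 p r Hp)
    (fun r => Hch2 p r Hp) (fun r => Hout p r Hp)
    (fun r r' r1 r2 => Hagr p p r r' r1 r2 Hp Hp)) Hr Hcert Hround.
move=> k; have [r [s [Hu Hk Hs]]] :=
  unbounded_uniq_seq (@committed_mono _ parent (ch p) (out p)) commits_good_round k.
by exists r, s.
Qed.
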